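(* Let $k\ge 3$ and consider $k$ processes $P_0,\dots,P_{k-1}$ (with distinct ids $0,\dots,k-1$) with inputs $v_0,\dots,v_{k-1}$, running the following algorithm on a single shared $\text{WRN}_{k}$ object: process $P_i$ performs $t\gets\texttt{WRN}(i,v_i)$ and then decides $t$ if $t\neq\bot$, and decides $v_i$ otherwise. This algorithm solves the $(k-1)$-set consensus task for these $k$ processes (wait-free).
   Context: A $\text{WRN}_{k}$ (Write and Read Next) object is a deterministic atomic shared object with a single operation $\texttt{WRN}(i,v)$, where $i\in\{0,\dots,k-1\}$ and $v\neq\bot$. Its state consists of $k$ values $A[0],\dots,A[k-1]$, initially all $\bot$; the operation $\texttt{WRN}(i,v)$ atomically sets $A[i]\gets v$ and returns $A[(i+1)\bmod k]$. Model: asynchronous shared memory; processes may crash. The $m$-set consensus task: each process has an input and every non-faulty process must output, within a finite number of its own steps, a value such that every output is the input of some process and there are at most $m$ different output values. *)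

From mathcomp Require Import all_boot.
Set Implicit Arguments. Unset Strict Implicit. Unset Printing Implicit Defensive.

(* The WRN_k object: state A[0..k-1], each entry either bot (None) or a value. *)
Definition wrn_state (k : nat) (V : Type) := 'I_k -> option V.

Definition wrn_init (k : nat) (V : Type) : wrn_state k V := fun _ => None.

Definition WRN (k : nat) (V : Type) (A : wrn_state k V) (i : 'I_k) (x : V)
  : option V * wrn_state k V :=
  (A (ordS i), fun j => if j == i then Some x else A j).

(* Configuration during an execution: object state and, for each process,
   the response of its WRN operation (meaningful once it has taken its step). *)
Definition config (k : nat) (V : Type) := (wrn_state k V * ('I_k -> option V))%type.

Definition step (k : nat) (V : Type) (v : 'I_k -> V) (c : config k V) (p : 'I_k)
  : config k V :=
  let (t, A') := WRN c.1 p (v p) in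
  (A', fun q => if q == p then t else c.2 q).

(* An execution is given by the (linearization) order [s] of the WRN steps
   actually taken; processes not in [s] crashed before taking their step. *)
Definition exec (k : nat) (V : Type) (v : 'I_k -> V) (s : seq 'I_k) : config k V :=
  foldl (@step k V v) (@wrn_init k V, fun _ => None) s.

Definition decision (k : nat) (V : Type) (v : 'I_k -> V) (s : seq 'I_k) (p : 'I_k) : V :=
  match (exec v s).2 p with Some t => t | None => v p end.

From mathcomp Require Import all_boot.

Set Implicit Arguments.
Unset Strict Implicit.
Unset Printing Implicit Defensive.

(* Every process decides its own input or that of its successor, which it reads
   only if the successor stepped first.  The first process p0 to step reads bot
   and decides v p0; its predecessor, if it steps at all, steps after p0 and so
   reads v p0 too.  Hence the predecessor of p0 never contributes a new value,
   and at most k - 1 values are decided. *)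

Lemma ordS_neq n (i : 'I_n) : 1 < n -> ordS i != i.
Proof.
move=> n_gt1; apply/eqP => /(congr1 val) /=.
have := ltn_ord i; rewrite leq_eqVlt => /orP [/eqP i1_eq_n | i1_lt_n].
  by rewrite i1_eq_n modnn => i0; rewrite -i1_eq_n -i0 in n_gt1.
by rewrite modn_small // => /eqP; rewrite (gtn_eqF (ltnSn i)).
Qed.

Lemma size_undup_map_le_cardC1 (T : finType) (W : eqType) (f : T -> W)
    (r q : T) (D : seq T) :
  q != r -> (r \in D -> f r = f q) -> size (undup (map f D)) <= #|T|.-1.
Proof.
move=> q_neq_r frq; rewrite -(cardC1 r) -(size_image f).
apply: uniq_leq_size; first exact: undup_uniq.
move=> x; rewrite mem_undup => /mapP [p pD ->].
have [p_eq_r | p_neq_r] := eqVneq p r; last exact: image_f.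
by move: pD; rewrite p_eq_r => /frq ->; apply: image_f.
Qed.

Section Execution.

Variables (k : nat) (V : Type) (v : 'I_k -> V).

Lemma exec_rcons s p : exec v (rcons s p) = step v (exec v s) p.
Proof. by rewrite /exec foldl_rcons. Qed.

Lemma exec_wrn_state s j :
  (exec v s).1 j = if j \in s then Some (v j) else None.
Proof.
elim/last_ind: s => [|s p IHs] //.
rewrite exec_rcons /step /WRN /= IHs mem_rcons in_cons.
by case: eqP => [->|].
Qed.

Lemma exec_response_cat s1 p s2 : p \notin s2 ->
  (exec v (s1 ++ p :: s2)).2 p = (exec v s1).1 (ordS p).
Proof.
elim/last_ind: s2 => [|s2 q IHs2].
  by move=> _; rewrite cats1 exec_rcons /step /WRN /= eqxx.
rewrite mem_rcons in_cons negb_or => /andP [p_neq_q p_notin_s2].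
rewrite -rcons_cons -rcons_cat exec_rcons /step /WRN /=.
by rewrite (negbTE p_neq_q) IHs2.
Qed.

Lemma decision_cat s1 p s2 : uniq (s1 ++ p :: s2) ->
  decision v (s1 ++ p :: s2) p = if ordS p \in s1 then v (ordS p) else v p.
Proof.
rewrite cat_uniq /= => /and3P [_ _ /andP [p_notin_s2 _]].
by rewrite /decision exec_response_cat // exec_wrn_state; case: ifP.
Qed.

Lemma decision_input s p : uniq s -> p \in s ->
  decision v s p = v p \/ decision v s p = v (ordS p).
Proof.
move=> uniq_s /splitPr ps; case: ps uniq_s => s1 s2 /decision_cat ->.
by case: ifP; [right | left].
Qed.

Lemma decision_head p0 s : uniq (p0 :: s) -> decision v (p0 :: s) p0 = v p0.
Proof. by rewrite -[p0 :: s]cat0s => /decision_cat ->. Qed.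

Lemma decision_pred_head p0 s : uniq (p0 :: s) -> ord_pred p0 \in s ->
  decision v (p0 :: s) (ord_pred p0) = v p0.
Proof.
move=> uniq_s /splitPr ps; case: ps uniq_s => s1 s2.
by rewrite -cat_cons => /decision_cat ->; rewrite ord_predK mem_head.
Qed.

End Execution.

Theorem corollary9 (k : nat) (hk : 3 <= k) (V : eqType) (v : 'I_k -> V)
  (s : seq 'I_k) (D : seq 'I_k) :
  uniq s -> {subset D <= s} ->
  (forall p, p \in D -> exists j : 'I_k, decision v s p = v j) /\
  size (undup [seq decision v s p | p <- D]) <= k.-1.
Proof.
move=> uniq_s sub_Ds; split.
  by move=> p /sub_Ds /(decision_input v uniq_s) [] ->; eexists.
case: s uniq_s sub_Ds => [|p0 s] uniq_s sub_Ds.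
  by case: D sub_Ds => [|p D] // /(_ p (mem_head p D)).
have p0_neq_pred : p0 != ord_pred p0.
  by rewrite -{1}(ord_predK p0) ordS_neq // (leq_trans _ hk).
rewrite -[k in _ <= k.-1]card_ord.
apply: (size_undup_map_le_cardC1 p0_neq_pred) => /sub_Ds.
rewrite in_cons eq_sym (negbTE p0_neq_pred) => pred_in_s.
by rewrite decision_pred_head ?decision_head.
Qed.
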